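(* Let $\mathbf L\in\mathbb R^3$, $\mathbf L\neq0$, and $T>0$. If a state $(\mathbf r,\mathbf v)\in\Omega$ minimizes $g(\mathbf r)$ over all states $(\mathbf r,\mathbf v)\in\Omega$ satisfying $\mathbf L(\mathbf r,\mathbf v)=\mathbf L$ and $T(\mathbf v)=T$, then all vectors $\mathbf r_i,\mathbf v_i$, $i=1,\dots,N$, lie in the plane through the origin orthogonal to $\mathbf L$; consequently the solution of the equations of motion starting from $(\mathbf r,\mathbf v)$ is a flat (planar) trajectory. That is, the minimum in this problem can be achieved only at states belonging to flat trajectories.
   Context: Fix $N\ge2$, masses $m_i>0$, $\gamma>0$. Three-dimensional configuration space $\mathfrak R_3=\{\mathbf r=(\mathbf r_1,\dots,\mathbf r_N)\in(\mathbb R^3)^N:\ \mathbf r_i\ne\mathbf r_j \text{ for } i\neq j\}$; phase space $\Omega=\mathfrak R_3\times(\mathbb R^3)^N$ with states $(\mathbf r,\mathbf v)$, $\mathbf v=(\mathbf v_1,\dots,\mathbf v_N)$. Angular momentum $\mathbf L(\mathbf r,\mathbf v)=\sum_i m_i\,\mathbf r_i\times\mathbf v_i$; kinetic energy $T(\mathbf v)=\frac12\sum_im_i|\mathbf v_i|^2$; $g(\mathbf r)=\sum_im_i|\mathbf r_i|^2$. Equations of motion: $m_i\ddot{\mathbf r}_i=\sum_{j\ne i}\gamma m_im_j(\mathbf r_j-\mathbf r_i)/|\mathbf r_j-\mathbf r_i|^3$. *)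

From HB Require Import structures.
From mathcomp Require Import all_boot all_order all_algebra.
From mathcomp Require Import reals.
Set Implicit Arguments. Unset Strict Implicit. Unset Printing Implicit Defensive.
Import Order.TTheory GRing.Theory Num.Theory.
Local Open Scope ring_scope.

Section Defs.
Variable R : realType.

Definition dot3 (u w : 'rV[R]_3) : R := \sum_(k < 3) u 0 k * w 0 k.

Definition cross3 (u w : 'rV[R]_3) : 'rV[R]_3 :=
  \row_(k < 3)
    (if val k == 0%N then u 0 (inord 1) * w 0 (inord 2) - u 0 (inord 2) * w 0 (inord 1)
     else if val k == 1%N then u 0 (inord 2) * w 0 (inord 0) - u 0 (inord 0) * w 0 (inord 2)
     else u 0 (inord 0) * w 0 (inord 1) - u 0 (inord 1) * w 0 (inord 0)).

Variable N : nat.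

Definition in_config (r : 'I_N -> 'rV[R]_3) : Prop :=
  forall i j : 'I_N, i != j -> r i != r j.

Definition ang_mom (m : 'I_N -> R) (r v : 'I_N -> 'rV[R]_3) : 'rV[R]_3 :=
  \sum_(i < N) m i *: cross3 (r i) (v i).

Definition kinetic (m : 'I_N -> R) (v : 'I_N -> 'rV[R]_3) : R :=
  2^-1 * \sum_(i < N) m i * dot3 (v i) (v i).

Definition gmom (m : 'I_N -> R) (r : 'I_N -> 'rV[R]_3) : R :=
  \sum_(i < N) m i * dot3 (r i) (r i).

End Defs.

(* For every state and every real l,
     sum_i m_i |v_i - l L x r_i|^2 = 2T - 2l|L|^2 + l^2 (|L|^2 g - sum_i m_i (r_i . L)^2),
   where L, T and g are the angular momentum, kinetic energy and g of the state.
   A planar configuration, scaled and set in rigid rotation about L, realises L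
   and T with g = |L|^2/(2T); so a minimiser has g <= |L|^2/(2T).  Taking
   l = 1/g, the left side and l^2 sum_i m_i (r_i . L)^2 are nonnegative with sum
   2T - |L|^2/g <= 0, hence both vanish: every r_i is orthogonal to L and
   v_i = L x r_i / g is orthogonal to L as well. *)

From HB Require Import structures.
From mathcomp Require Import all_boot all_order all_algebra.
From mathcomp Require Import reals.
From mathcomp Require Import ring lra.
Import Order.TTheory GRing.Theory Num.Theory.
Local Open Scope ring_scope.

Section Vectors.
Context {R : realType}.
Implicit Types (u w L : 'rV[R]_3) (c : R).

Definition row3 (x y z : R) : 'rV[R]_3 := \row_(k < 3) [:: x; y; z]`_k.

Lemma row3E x y z :
  (row3 x y z 0 (inord 0) = x) * (row3 x y z 0 (inord 1) = y)
  * (row3 x y z 0 (inord 2) = z).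
Proof. by rewrite !mxE /= !inordK. Qed.

Lemma cross3E u w :
  (cross3 u w 0 (inord 0) = u 0 (inord 1) * w 0 (inord 2) - u 0 (inord 2) * w 0 (inord 1))
  * (cross3 u w 0 (inord 1) = u 0 (inord 2) * w 0 (inord 0) - u 0 (inord 0) * w 0 (inord 2))
  * (cross3 u w 0 (inord 2) = u 0 (inord 0) * w 0 (inord 1) - u 0 (inord 1) * w 0 (inord 0)).
Proof. by rewrite !mxE /= !inordK. Qed.

Lemma dot3E u w : dot3 u w =
  u 0 (inord 0) * w 0 (inord 0) + u 0 (inord 1) * w 0 (inord 1)
  + u 0 (inord 2) * w 0 (inord 2).
Proof.
rewrite /dot3 !big_ord_recr big_ord0 /= add0r.
by congr (_ * _ + _ * _ + _ * _); congr (_ 0 _); apply: val_inj; rewrite /= inordK.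
Qed.

Lemma row3_eq u w :
  u 0 (inord 0) = w 0 (inord 0) -> u 0 (inord 1) = w 0 (inord 1) ->
  u 0 (inord 2) = w 0 (inord 2) -> u = w.
Proof.
by move=> ? ? ?; apply/rowP => -[[|[|[|//]]] ?]; rewrite -[Ordinal _]inord_val.
Qed.

Ltac coords := rewrite ?dot3E; do ?rewrite (cross3E, row3E, mxE).

Lemma dot3C u w : dot3 u w = dot3 w u.
Proof. coords; ring. Qed.

Lemma dot3Zl c u w : dot3 (c *: u) w = c * dot3 u w.
Proof. coords; ring. Qed.

Lemma dot3Zr c u w : dot3 u (c *: w) = c * dot3 u w.
Proof. by rewrite dot3C dot3Zl dot3C. Qed.

Lemma dot3_sumr (I : finType) u (F : I -> 'rV[R]_3) :
  dot3 u (\sum_i F i) = \sum_i dot3 u (F i).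
Proof.
rewrite /dot3; under eq_bigr do rewrite summxE big_distrr.
exact: exchange_big.
Qed.

Lemma dot3_subZ u w c :
  dot3 (u - c *: w) (u - c *: w) = dot3 u u - 2 * c * dot3 u w + c ^+ 2 * dot3 w w.
Proof. coords; ring. Qed.

Lemma dot3_ge0 u : 0 <= dot3 u u.
Proof. by rewrite dot3E -!expr2 !addr_ge0 ?sqr_ge0. Qed.

Lemma dot3_eq0 u : dot3 u u = 0 -> u = 0.
Proof.
rewrite dot3E -!expr2 => u2_eq0.
by apply: row3_eq; rewrite mxE; apply/eqP; rewrite -sqrf_eq0; apply/eqP; nra.
Qed.

Lemma dot3_gt0 u : u != 0 -> 0 < dot3 u u.
Proof.
by move=> u_neq0; rewrite lt_def dot3_ge0 andbT; apply: contraNneq u_neq0 => /dot3_eq0 ->.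
Qed.

Lemma cross3Zr c u w : cross3 u (c *: w) = c *: cross3 u w.
Proof. by apply: row3_eq; coords; ring. Qed.

Lemma cross30l w : cross3 0 w = 0.
Proof. by apply: row3_eq; coords; ring. Qed.

Lemma dot3_cross3_orth L u : dot3 (cross3 L u) L = 0.
Proof. coords; ring. Qed.

Lemma dot3_cross3_cyclic L u w : dot3 u (cross3 L w) = dot3 L (cross3 w u).
Proof. coords; ring. Qed.

Lemma dot3_cross3 L u :
  dot3 (cross3 L u) (cross3 L u) = dot3 L L * dot3 u u - dot3 u L ^+ 2.
Proof. coords; ring. Qed.

Lemma cross3_cross3 L u : cross3 u (cross3 L u) = dot3 u u *: L - dot3 u L *: u.
Proof. by apply: row3_eq; coords; ring. Qed.

Lemma exists_orthogonal L : exists2 a, dot3 a L = 0 & a != 0.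
Proof.
have [/andP[/eqP L0 _] | L01] := boolP ((L 0 (inord 0) == 0) && (L 0 (inord 1) == 0)).
  exists (row3 1 0 0); first by coords; rewrite L0; ring.
  by apply/eqP => /rowP/(_ (inord 0)); rewrite row3E mxE; apply/eqP/oner_neq0.
exists (row3 (- L 0 (inord 1)) (L 0 (inord 0)) 0); first by coords; ring.
apply: contraNneq L01 => /rowP a_eq0.
have := a_eq0 (inord 0); have := a_eq0 (inord 1); rewrite !row3E !mxE => -> /eqP.
by rewrite oppr_eq0 eqxx.
Qed.

End Vectors.

Section Particles.
Context {R : realType} {N : nat} {m : 'I_N -> R}.
Hypothesis m_gt0 : forall i, 0 < m i.
Implicit Types (r v q : 'I_N -> 'rV[R]_3) (L : 'rV[R]_3) (F : 'I_N -> R).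

Lemma weighted_sum_ge0 F : (forall i, 0 <= F i) -> 0 <= \sum_i m i * F i.
Proof. by move=> F_ge0; apply: sumr_ge0 => i _; rewrite mulr_ge0 ?F_ge0 ?ltW. Qed.

Lemma weighted_sum_eq0 F :
  (forall i, 0 <= F i) -> \sum_i m i * F i = 0 -> forall i, F i = 0.
Proof.
move=> F_ge0 /(psumr_eq0P (fun j _ => mulr_ge0 (ltW (m_gt0 j)) (F_ge0 j))) mF0 i.
by apply/eqP; rewrite -(mulrI_eq0 _ (lregP (lt0r_neq0 (m_gt0 i)))) mF0.
Qed.

Lemma gmom_ge0 r : 0 <= gmom m r.
Proof. by apply: weighted_sum_ge0 => i; apply: dot3_ge0. Qed.

Lemma gmom_eq0 r : gmom m r = 0 -> forall i, r i = 0.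
Proof.
move=> g0 i; apply: dot3_eq0; move: i.
by apply: (weighted_sum_eq0 _ _ g0) => j; apply: dot3_ge0.
Qed.

Lemma gmom_gt0 r v : ang_mom m r v != 0 -> 0 < gmom m r.
Proof.
move=> L_neq0; rewrite lt_def gmom_ge0 andbT; apply: contraNneq L_neq0 => /gmom_eq0 r0.
by rewrite /ang_mom big1 // => i _; rewrite r0 cross30l scaler0.
Qed.

Lemma gmomZ c r : gmom m (fun i => c *: r i) = c ^+ 2 * gmom m r.
Proof. by rewrite /gmom mulr_sumr; apply: eq_bigr => i _; rewrite dot3Zl dot3Zr; ring. Qed.

Lemma in_configZ c r : c != 0 -> in_config r -> in_config (fun i => c *: r i).
Proof. by move=> c_neq0 r_config i j /r_config; apply: contra => /eqP/(scalerI c_neq0)->. Qed.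

Lemma ang_mom_rotation w L r : (forall i, dot3 (r i) L = 0) ->
  ang_mom m r (fun i => w *: cross3 L (r i)) = (w * gmom m r) *: L.
Proof.
move=> r_orth; rewrite /ang_mom /gmom mulr_sumr scaler_suml; apply: eq_bigr => i _.
by rewrite cross3Zr cross3_cross3 r_orth scale0r subr0 !scalerA mulrCA mulrA.
Qed.

Lemma kinetic_rotation w L r : (forall i, dot3 (r i) L = 0) ->
  kinetic m (fun i => w *: cross3 L (r i)) = 2^-1 * (w ^+ 2 * dot3 L L * gmom m r).
Proof.
move=> r_orth; rewrite /kinetic /gmom; congr (_ * _).
rewrite mulr_sumr; apply: eq_bigr => i _.
by rewrite dot3Zl dot3Zr dot3_cross3 r_orth; ring.
Qed.

Lemma exists_planar_config L : (0 < N)%N ->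
  exists q, [/\ in_config q, forall i, dot3 (q i) L = 0 & 0 < gmom m q].
Proof.
move=> N_gt0; have [a a_orth a_neq0] := exists_orthogonal L.
exists (fun i => i.+1%:R *: a); split.
- move=> i j; apply: contra; rewrite -subr_eq0 -scalerBl scaler_eq0 (negbTE a_neq0) orbF.
  by rewrite subr_eq0 eqr_nat eqSS.
- by move=> i; rewrite dot3Zl a_orth mulr0.
- rewrite lt_def gmom_ge0 andbT; apply: contraNneq a_neq0 => /gmom_eq0/(_ (Ordinal N_gt0)).
  by move/eqP; rewrite scaler_eq0 pnatr_eq0.
Qed.

Lemma exists_rotating_state {L} {T : R} {q} : L != 0 -> 0 < T ->
  in_config q -> (forall i, dot3 (q i) L = 0) -> 0 < gmom m q ->
  exists r' v', [/\ in_config r', ang_mom m r' v' = L, kinetic m v' = T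
                  & gmom m r' = dot3 L L / (2 * T)].
Proof.
move=> L_neq0 T_gt0 q_config q_orth gq_gt0.
have LL_gt0 : 0 < dot3 L L by apply: dot3_gt0.
(* The scale s makes g = |L|^2/(2T); angular velocity 1/g then yields momentum L
   and energy |L|^2/(2g) = T. *)
pose s := Num.sqrt (dot3 L L / (2 * T * gmom m q)).
have s_gt0 : 0 < s by rewrite sqrtr_gt0 divr_gt0 // !mulr_gt0.
pose r' i := s *: q i.
have g' : gmom m r' = dot3 L L / (2 * T).
  rewrite gmomZ sqr_sqrtr ?ltW ?divr_gt0 ?mulr_gt0 //; field.
  by rewrite !lt0r_neq0.
have r'_orth i : dot3 (r' i) L = 0 by rewrite dot3Zl q_orth mulr0.
exists r', (fun i => (gmom m r')^-1 *: cross3 L (r' i)); split => //.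
- exact: in_configZ (lt0r_neq0 s_gt0) q_config.
- by rewrite ang_mom_rotation // mulVf ?scale1r // g' mulf_neq0 ?invr_neq0 ?lt0r_neq0 ?mulr_gt0.
- by rewrite kinetic_rotation // g'; field; rewrite !lt0r_neq0.
Qed.

Lemma sum_deviation_from_rotation l L r v :
  \sum_i m i * dot3 (v i - l *: cross3 L (r i)) (v i - l *: cross3 L (r i)) =
  2 * kinetic m v - 2 * l * dot3 L (ang_mom m r v)
  + l ^+ 2 * (dot3 L L * gmom m r - \sum_i m i * dot3 (r i) L ^+ 2).
Proof.
have -> : 2 * kinetic m v = \sum_i m i * dot3 (v i) (v i).
  by rewrite /kinetic mulrA divff ?mul1r ?pnatr_eq0.
have -> : dot3 L (ang_mom m r v) = \sum_i m i * dot3 L (cross3 (r i) (v i)).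
  by rewrite /ang_mom dot3_sumr; apply: eq_bigr => i _; rewrite dot3Zr.
rewrite /gmom !mulr_sumr -!sumrB mulr_sumr -big_split; apply: eq_bigr => i _.
by rewrite /= dot3_subZ dot3_cross3_cyclic dot3_cross3; ring.
Qed.

Lemma rigid_rotation_of_gmom_le {L} {T : R} {r v} :
  ang_mom m r v = L -> L != 0 -> kinetic m v = T -> 0 < T ->
  gmom m r <= dot3 L L / (2 * T) ->
  forall i, dot3 (r i) L = 0 /\ v i = (gmom m r)^-1 *: cross3 L (r i).
Proof.
move=> angL L_neq0 kinT T_gt0 g_le.
have g_gt0 : 0 < gmom m r by apply: (@gmom_gt0 _ v); rewrite angL.
have := sum_deviation_from_rotation (gmom m r)^-1 L r v; rewrite kinT angL.
set g := gmom m r in g_le g_gt0 *.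
set S := \sum_i _; set Q := \sum_i _ => S_eq.
have S_ge0 : 0 <= S by apply: weighted_sum_ge0 => i; apply: dot3_ge0.
have Q_ge0 : 0 <= g^-1 ^+ 2 * Q.
  by rewrite mulr_ge0 ?sqr_ge0 //; apply: weighted_sum_ge0 => i; apply: sqr_ge0.
have SQ_le0 : S + g^-1 ^+ 2 * Q <= 0.
  have -> : S + g^-1 ^+ 2 * Q = 2 * T - dot3 L L / g.
    by rewrite S_eq; field; rewrite lt0r_neq0.
  by move: g_le; rewrite subr_le0 !ler_pdivlMr ?mulr_gt0 // mulrC.
have S0 : S = 0 by lra.
have Q0 : Q = 0.
  have /eqP : g^-1 ^+ 2 * Q = 0 by lra.
  by rewrite mulf_eq0 sqrf_eq0 invr_eq0 (gt_eqF g_gt0) => /eqP.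
move=> i; split.
- apply/eqP; rewrite -sqrf_eq0; apply/eqP.
  by apply: (weighted_sum_eq0 _ _ Q0) => j; apply: sqr_ge0.
- apply/eqP; rewrite -subr_eq0; apply/eqP/dot3_eq0.
  by apply: (weighted_sum_eq0 _ _ S0) => j; apply: dot3_ge0.
Qed.

End Particles.

Theorem theorem10p1 (R : realType) (N : nat) (hN : (2 <= N)%N)
  (m : 'I_N -> R) (hm : forall i, 0 < m i)
  (Lv : 'rV[R]_3) (hL : Lv != 0) (T : R) (hT : 0 < T)
  (r v : 'I_N -> 'rV[R]_3) :
  in_config r ->
  ang_mom m r v = Lv ->
  kinetic m v = T ->
  (forall r' v' : 'I_N -> 'rV[R]_3,
      in_config r' -> ang_mom m r' v' = Lv -> kinetic m v' = T ->
      gmom m r <= gmom m r') ->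
  forall i : 'I_N, dot3 (r i) Lv = 0 /\ dot3 (v i) Lv = 0.
Proof.
move=> _ angL kinT r_min.
have [q [q_config q_orth gq_gt0]] := exists_planar_config hm Lv (ltnW hN).
have [r' [v' [r'_config angL' kinT' g'E]]] :=
  exists_rotating_state (m:=m) hL hT q_config q_orth gq_gt0.
have g_le : gmom m r <= dot3 Lv Lv / (2 * T).
  by rewrite -g'E; exact: r_min r'_config angL' kinT'.
move=> i; have [r_orth ->] := rigid_rotation_of_gmom_le hm angL hL kinT hT g_le i.
by rewrite dot3Zl dot3_cross3_orth mulr0.
Qed.
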